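(* Let $Q\in\mathbb R^{n\times n}$ be symmetric positive semidefinite, $b_0,\ldots,b_p\in\mathbb R^n$, $d_0,\ldots,d_p\in\mathbb R$, $-\infty\le l_i\le u_i\le+\infty$, $f_i(x)=x^TQx+2b_i^Tx+d_i$, and consider \[ ({\rm UQ})\quad \max_{x}\ f_0(x)\quad\text{s.t.}\quad l_i\le f_i(x)\le u_i,\ i=1,\ldots,p, \] \[ ({\rm SOCP})\quad \max_{x,t}\ t+2b_0^Tx+d_0\quad\text{s.t.}\quad l_i\le t+2b_i^Tx+d_i\le u_i,\ i=1,\ldots,p,\quad \left\|\begin{pmatrix}Q^{1/2}x\\ \frac{t-1}{2}\end{pmatrix}\right\|\le\frac{t+1}{2}. \] Suppose ${\rm rank}[b_1,\ldots,b_p]\le{\rm rank}(Q)-1$. Then (UQ) is equivalent to (SOCP) in the sense that $x^*$ globally solves (UQ) if and only if $(x^*,t^* ):=(x^*,x^{*T}Qx^* )$ globally solves (SOCP).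
   Context: $Q^{1/2}$ is the positive semidefinite square root of $Q$; $\|\cdot\|$ is the Euclidean norm. *)

From HB Require Import structures.
From mathcomp Require Import all_boot all_order all_algebra.
From mathcomp Require Import reals constructive_ereal.
Set Implicit Arguments. Unset Strict Implicit. Unset Printing Implicit Defensive.
Import Order.TTheory GRing.Theory Num.Theory.
Local Open Scope ring_scope.

Section Defs.
Variable R : realType.

Definition qform (n : nat) (Q : 'M[R]_n) (x : 'cV[R]_n) : R := (x^T *m Q *m x) 0 0.

Definition inner (n : nat) (b x : 'cV[R]_n) : R := (b^T *m x) 0 0.

Definition psd (n : nat) (Q : 'M[R]_n) : Prop :=
  Q^T = Q /\ forall x : 'cV[R]_n, 0 <= qform Q x.

(* S is the positive semidefinite square root Q^{1/2} of Q (unique when Q is psd) *)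
Definition is_psd_sqrt (n : nat) (Q S : 'M[R]_n) : Prop := psd S /\ S *m S = Q.

Definition enorm (m : nat) (v : 'cV[R]_m) : R := Num.sqrt (\sum_i v i 0 ^+ 2).

Definition fq (n : nat) (Q : 'M[R]_n) (b : 'cV[R]_n) (d : R) (x : 'cV[R]_n) : R :=
  qform Q x + 2 * inner b x + d.

Definition flin (n : nat) (b : 'cV[R]_n) (d : R) (x : 'cV[R]_n) (t : R) : R :=
  t + 2 * inner b x + d.

(* feasibility in (UQ); the b_i are the columns of B *)
Definition UQ_feasible (n p : nat) (Q : 'M[R]_n) (B : 'M[R]_(n, p)) (d : 'I_p -> R)
    (l u : 'I_p -> \bar R) (x : 'cV[R]_n) : Prop :=
  forall i : 'I_p, (l i <= (fq Q (col i B) (d i) x)%:E)%E /\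
                   ((fq Q (col i B) (d i) x)%:E <= u i)%E.

Definition UQ_global_sol (n p : nat) (Q : 'M[R]_n) (b0 : 'cV[R]_n) (d0 : R)
    (B : 'M[R]_(n, p)) (d : 'I_p -> R) (l u : 'I_p -> \bar R) (xs : 'cV[R]_n) : Prop :=
  UQ_feasible Q B d l u xs /\
  forall x, UQ_feasible Q B d l u x -> fq Q b0 d0 x <= fq Q b0 d0 xs.

(* feasibility in (SOCP); S plays the role of Q^{1/2} *)
Definition SOCP_feasible (n p : nat) (S : 'M[R]_n) (B : 'M[R]_(n, p)) (d : 'I_p -> R)
    (l u : 'I_p -> \bar R) (x : 'cV[R]_n) (t : R) : Prop :=
  (forall i : 'I_p, (l i <= (flin (col i B) (d i) x t)%:E)%E /\
                    ((flin (col i B) (d i) x t)%:E <= u i)%E) /\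
  enorm (col_mx (S *m x) (((t - 1) / 2)%:M : 'cV[R]_1)) <= (t + 1) / 2.

Definition SOCP_global_sol (n p : nat) (S : 'M[R]_n) (b0 : 'cV[R]_n) (d0 : R)
    (B : 'M[R]_(n, p)) (d : 'I_p -> R) (l u : 'I_p -> \bar R)
    (xs : 'cV[R]_n) (ts : R) : Prop :=
  SOCP_feasible S B d l u xs ts /\
  forall x t, SOCP_feasible S B d l u x t -> flin b0 d0 x t <= flin b0 d0 xs ts.

End Defs.

(** Every point of the rotated cone [x^T Q x <= t] can be pushed onto its boundary
    [x^T Q x = t] along a direction [v] with [b_i^T v = 0] for all [i >= 1] and
    [v^T Q v > 0], which exists by the rank hypothesis.  The
    move keeps every [t + 2 b_i^T x + d_i] fixed, and of the two boundary points on
    the line one does not decrease [2 b_0^T x], so the second-order cone relaxation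
    of (UQ) has no better value than (UQ) itself. *)
From HB Require Import structures.
From mathcomp Require Import all_boot all_order all_algebra.
From mathcomp Require Import reals constructive_ereal.
From mathcomp Require Import ring lra zify.
Import Order.TTheory GRing.Theory Num.Theory.
Set Implicit Arguments. Unset Strict Implicit.
Local Open Scope ring_scope.

Section QuadraticRoots.
Variable R : rcfType.

Lemma quadratic_nonneg_root (a b c : R) : 0 < a -> c <= 0 ->
  exists2 s, 0 <= s & a * s ^+ 2 + 2 * b * s + c = 0.
Proof.
move=> a0 c0.
have disc0 : 0 <= b ^+ 2 - a * c by rewrite subr_ge0; nra.
pose D := Num.sqrt (b ^+ 2 - a * c).
have D2 : D ^+ 2 = b ^+ 2 - a * c by rewrite sqr_sqrtr.
have bD : b <= D.
  apply: le_trans (ler_norm b) _; rewrite -sqrtr_sqr ler_sqrt //; nra.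
exists ((D - b) / a); first by rewrite divr_ge0 ?subr_ge0 // ltW.
set s := (D - b) / a.
suff : a * (a * s ^+ 2 + 2 * b * s + c) = 0.
  by move/eqP; rewrite mulf_eq0 gt_eqF //= => /eqP.
have -> : a * (a * s ^+ 2 + 2 * b * s + c) = (a * s) ^+ 2 + 2 * b * (a * s) + a * c.
  by ring.
by rewrite /s mulrC divfK ?gt_eqF //; nra.
Qed.

Lemma quadratic_signed_root (a b c w : R) : 0 < a -> c <= 0 ->
  exists2 s, 0 <= s * w & a * s ^+ 2 + 2 * b * s + c = 0.
Proof.
move=> a0 c0; have [w0 | w0] := leP 0 w.
  by have [s s0 hs] := quadratic_nonneg_root b a0 c0; exists s; rewrite ?mulr_ge0.
have [s s0 hs] := quadratic_nonneg_root (- b) a0 c0.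
exists (- s); first by rewrite mulNr -mulrN mulr_ge0 // oppr_ge0 ltW.
by rewrite sqrrN; lra.
Qed.

End QuadraticRoots.

Section QuadraticForms.
Variables (R : realType) (n : nat).
Implicit Types (Q S : 'M[R]_n) (b x v : 'cV[R]_n).

Lemma qform_psd_sqrt Q S x : is_psd_sqrt Q S ->
  qform Q x = \sum_k (S *m x) k 0 ^+ 2.
Proof.
move=> [[ST _] <-]; rewrite /qform.
have -> : x^T *m (S *m S) *m x = (S *m x)^T *m (S *m x).
  by rewrite trmx_mul ST !mulmxA.
by rewrite mxE; apply: eq_bigr => k _; rewrite mxE expr2.
Qed.

Lemma enorm_cone_le Q S x t : is_psd_sqrt Q S ->
  enorm (col_mx (S *m x) (((t - 1) / 2)%:M : 'cV[R]_1)) <= (t + 1) / 2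
  <-> qform Q x <= t.
Proof.
move=> hS.
have -> : enorm (col_mx (S *m x) (((t - 1) / 2)%:M : 'cV[R]_1))
        = Num.sqrt (qform Q x + ((t - 1) / 2) ^+ 2).
  rewrite /enorm big_split_ord /= (qform_psd_sqrt x hS); congr (Num.sqrt (_ + _)).
    by apply: eq_bigr => k _; rewrite col_mxEu.
  by rewrite big_ord1 col_mxEd mxE eqxx mulr1n.
have q0 : 0 <= qform Q x.
  by rewrite (qform_psd_sqrt x hS) sumr_ge0 // => k _; rewrite sqr_ge0.
have sqrt_le (y : R) : 0 <= y -> (Num.sqrt (qform Q x + ((t - 1) / 2) ^+ 2) <= y)
                                 = (qform Q x + ((t - 1) / 2) ^+ 2 <= y ^+ 2).
  by move=> y0; rewrite -{1}(ger0_norm y0) -sqrtr_sqr ler_sqrt ?sqr_ge0.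
split=> [h | h].
  have y0 : 0 <= (t + 1) / 2 by apply: le_trans h; apply: sqrtr_ge0.
  by move: h; rewrite sqrt_le //; nra.
by rewrite sqrt_le; nra.
Qed.

Lemma qform_eq0_mulmx Q S x : is_psd_sqrt Q S -> qform Q x = 0 -> Q *m x = 0.
Proof.
move=> hS; rewrite (qform_psd_sqrt x hS) => /psumr_eq0P Sx_sq0.
have Sx0 : S *m x = 0.
  apply/matrixP => i j; rewrite ord1 [RHS]mxE; apply/eqP; rewrite -sqrf_eq0.
  by apply/eqP/Sx_sq0 => // k _; rewrite sqr_ge0.
by case: hS => _ <-; rewrite -mulmxA Sx0 mulmx0.
Qed.

Lemma qformDZ Q x v s : Q^T = Q ->
  qform Q (x + s *: v) = qform Q x + 2 * s * (x^T *m Q *m v) 0 0 + s ^+ 2 * qform Q v.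
Proof.
move=> QT; rewrite /qform.
have vQx : v^T *m Q *m x = (x^T *m Q *m v)^T by rewrite !trmx_mul trmxK QT mulmxA.
have ->: (x + s *: v)^T = x^T + s *: v^T by rewrite raddfD /= linearZ.
rewrite !mulmxDl !mulmxDr -!scalemxAl -!scalemxAr vQx.
rewrite !mxE; ring.
Qed.

Lemma innerDZ b x v s : inner b (x + s *: v) = inner b x + s * inner b v.
Proof. by rewrite /inner mulmxDr -scalemxAr !mxE. Qed.

Lemma inner_col_ker p (B : 'M[R]_(n, p)) v i : v^T *m B = 0 -> inner (col i B) v = 0.
Proof.
move=> /matrixP /(_ 0 i); rewrite [RHS]mxE /inner mxE => <-.
by rewrite mxE; apply: eq_bigr => k _; rewrite !mxE mulrC.
Qed.

(* If every row of [kermx B] had zero [Q]-form, [Q] would kill them all, so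
   [kermx B <= kermx Q], which is impossible when [\rank B < \rank Q]. *)
Lemma exists_ker_qform_pos p Q S (B : 'M[R]_(n, p)) : psd Q -> is_psd_sqrt Q S ->
  (\rank B < \rank Q)%N -> exists v, v^T *m B = 0 /\ 0 < qform Q v.
Proof.
move=> [QT Qge0] hS rkBQ; pose K := kermx B.
have [i Ki_pos | no_pos] := pickP (fun i => 0 < qform Q (row i K)^T).
  by exists (row i K)^T; rewrite trmxK -row_mul mulmx_ker row0.
have KQ0 : K *m Q = 0.
  apply/row_matrixP => i; rewrite row_mul row0.
  have /(qform_eq0_mulmx hS) : qform Q (row i K)^T = 0.
    by apply/eqP; rewrite eq_le Qge0 andbT leNgt no_pos.
  by move=> QKi0; rewrite -[row i K]trmxK -QT -trmx_mul QKi0 trmx0.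
have /mxrankS : (K <= kermx Q)%MS by apply/sub_kermxP.
rewrite !mxrank_ker; have := rank_leq_row Q; have := rank_leq_row B; lia.
Qed.

Lemma exists_shift_to_level Q x v t w : Q^T = Q -> 0 < qform Q v -> qform Q x <= t ->
  exists2 s, 0 <= s * w & qform Q (x + s *: v) = t.
Proof.
move=> QT v_pos x_le.
have [|s sw hs] := quadratic_signed_root ((x^T *m Q *m v) 0 0) w v_pos (c := qform Q x - t).
  by rewrite subr_le0.
by exists s => //; rewrite qformDZ //; lra.
Qed.

End QuadraticForms.

Section Relaxation.
Variables (R : realType) (n p : nat) (Q S : 'M[R]_n) (B : 'M[R]_(n, p)).
Variables (d : 'I_p -> R) (l u : 'I_p -> \bar R).
Hypothesis hS : is_psd_sqrt Q S.

Lemma fq_flin b d0 x : fq Q b d0 x = flin b d0 x (qform Q x).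
Proof. by []. Qed.

Lemma UQ_SOCP_feasible x :
  UQ_feasible Q B d l u x <-> SOCP_feasible S B d l u x (qform Q x).
Proof.
split=> [hx | [hx _]] //.
by split=> //; apply/(enorm_cone_le _ _ hS).
Qed.

Lemma SOCP_feasible_qform_le x t : SOCP_feasible S B d l u x t -> qform Q x <= t.
Proof. by move=> [_ /(enorm_cone_le _ _ hS)]. Qed.

Lemma SOCP_feasible_ker_shift x v s t : v^T *m B = 0 ->
  SOCP_feasible S B d l u x t -> qform Q (x + s *: v) = t ->
  UQ_feasible Q B d l u (x + s *: v).
Proof.
move=> vB [hx _] hq i.
by rewrite fq_flin hq /flin innerDZ (inner_col_ker _ vB) mulr0 addr0; apply: hx.
Qed.

End Relaxation.

Theorem corollary4 (R : realType) (n p : nat) (Q S : 'M[R]_n)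
    (b0 : 'cV[R]_n) (d0 : R) (B : 'M[R]_(n, p)) (d : 'I_p -> R)
    (l u : 'I_p -> \bar R) :
  psd Q ->
  is_psd_sqrt Q S ->
  (forall i, (l i <= u i)%E) ->
  ((\rank B).+1 <= \rank Q)%N ->
  forall xs : 'cV[R]_n,
    UQ_global_sol Q b0 d0 B d l u xs <->
    SOCP_global_sol S b0 d0 B d l u xs (qform Q xs).
Proof.
move=> hQ hS _ rkBQ xs; have feasE := UQ_SOCP_feasible B d l u hS.
split=> [[xs_feas xs_opt] | [xs_feas xs_opt]].
- split=> [|x t xt_feas]; first exact/feasE.
  have [v [vB v_pos]] := exists_ker_qform_pos hQ hS rkBQ.
  have [s sb0 hs] := exists_shift_to_level (inner b0 v) hQ.1 v_pos
    (SOCP_feasible_qform_le hS xt_feas).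
  have /xs_opt := SOCP_feasible_ker_shift vB xt_feas hs.
  rewrite !fq_flin hs /flin innerDZ; lra.
- split=> [|x /feasE /xs_opt]; first exact/feasE.
  by rewrite fq_flin.
Qed.
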